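(* In the setting described in the context, suppose $p_j(\theta)>0$ for all $j$ and all $\theta$. Then $H(\theta)=C_\Upsilon(\theta)$ holds if and only if the channel is quasi-classical, i.e. the eigenvectors $|w_k\rangle$ of the output state do not depend on $\theta$.
   Context: A one-parameter quantum channel is a map $\rho_0\mapsto\sum_k E_k(\theta)\rho_0E_k(\theta)^\dagger$ on density matrices on $\mathbb{C}^d$, with Kraus operators depending differentiably on real $\theta$ and $\sum_k E_k^\dagger E_k=I$. The input is a fixed pure state $\rho_0=|\psi_0\rangle\langle\psi_0|$. Canonical Kraus operators $\{\Upsilon_k(\theta)\}_{k=1}^d$: a differentiable Kraus representation of the same channel with $\mathrm{tr}\{\Upsilon_k\rho_0\Upsilon_j^\dagger\}=\delta_{jk}p_k(\theta)$. The output state is $\rho_{out}(\theta)=\sum_k p_k(\theta)|w_k(\theta)\rangle\langle w_k(\theta)|$ with $|w_k\rangle=p_k^{-1/2}\Upsilon_k|\psi_0\rangle$ an orthonormal basis depending differentiably on $\theta$. A prime denotes $d/d\theta$. $C_\Upsilon(\theta)=4\sum_k\mathrm{tr}\{\Upsilon_k'\rho_0\Upsilon_k'^\dagger\}$, and $H(\theta)=\mathrm{tr}\{\rho_{out}\lambda^2\}$ is the SLD quantum information, $\lambda$ a self-adjoint solution of $\rho_{out}'=\frac12(\rho_{out}\lambda+\lambda\rho_{out})$. *)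

From HB Require Import structures.
From mathcomp Require Import all_boot all_order all_algebra.
From mathcomp Require Import complex.
From mathcomp Require Import all_classical all_reals all_analysis.
Set Implicit Arguments. Unset Strict Implicit. Unset Printing Implicit Defensive.
Import Order.TTheory GRing.Theory Num.Theory.
Local Open Scope ring_scope.

Section QDefs.
Variable R : realType.

Definition adj (m n : nat) (A : 'M[R[i]]_(m, n)) : 'M[R[i]]_(n, m) :=
  map_mx Num.conj A^T.

Definition RtoC (x : R) : R[i] := Complex x 0.

Definition mx_derivable (m n : nat) (F : R -> 'M[R[i]]_(m, n)) : Prop :=
  forall (t : R) (i : 'I_m) (j : 'I_n),
    derivable (fun s => complex.Re (F s i j)) t 1 /\
    derivable (fun s => complex.Im (F s i j)) t 1.

Definition mx_deriv (m n : nat) (F : R -> 'M[R[i]]_(m, n)) (t : R)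
  : 'M[R[i]]_(m, n) :=
  \matrix_(i < m, j < n)
     Complex (derive1 (fun s => complex.Re (F s i j)) t)
             (derive1 (fun s => complex.Im (F s i j)) t).

Definition pure_dm (d : nat) (psi0 : 'cV[R[i]]_d) : 'M[R[i]]_d :=
  psi0 *m adj psi0.

Definition chan_out (d : nat) (psi0 : 'cV[R[i]]_d)
  (Y : 'I_d -> R -> 'M[R[i]]_d) (t : R) : 'M[R[i]]_d :=
  \sum_(k < d) (Y k t *m pure_dm psi0 *m adj (Y k t)).

Definition wvec (d : nat) (psi0 : 'cV[R[i]]_d)
  (Y : 'I_d -> R -> 'M[R[i]]_d) (p : 'I_d -> R -> R) (k : 'I_d) (t : R)
  : 'cV[R[i]]_d :=
  RtoC (Num.sqrt (p k t))^-1 *: (Y k t *m psi0).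

Definition C_Ups (d : nat) (psi0 : 'cV[R[i]]_d)
  (Y : 'I_d -> R -> 'M[R[i]]_d) (t : R) : R[i] :=
  4%:R * \sum_(k < d)
    \tr (mx_deriv (Y k) t *m pure_dm psi0 *m adj (mx_deriv (Y k) t)).

Definition is_SLD (d : nat) (rho rho' lam : 'M[R[i]]_d) : Prop :=
  adj lam = lam /\ rho' = (2%:R)^-1 *: (rho *m lam + lam *m rho).

Definition SLD_info (d : nat) (rho lam : 'M[R[i]]_d) : R[i] :=
  \tr (rho *m (lam *m lam)).

Definition quasi_classical (d : nat) (psi0 : 'cV[R[i]]_d)
  (Y : 'I_d -> R -> 'M[R[i]]_d) (p : 'I_d -> R -> R) : Prop :=
  forall (k : 'I_d) (t1 t2 : R), wvec psi0 Y p k t1 = wvec psi0 Y p k t2.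

End QDefs.

From HB Require Import structures.
From mathcomp Require Import all_boot all_order all_algebra.
From mathcomp Require Import complex.
From mathcomp Require Import all_classical all_reals all_analysis.
From mathcomp Require Import ring.
Import Order.TTheory GRing.Theory Num.Theory.
Local Open Scope ring_scope.
Set Implicit Arguments. Unset Strict Implicit.

(* Write Y_k(t) |psi0> = s_k |w_k> with s_k = sqrt p_k and collect these columns into
   V = W S, where S = diag(s) and W, whose columns are the w_k, is unitary.  With
   A = W^dagger V', the output state is W S^2 W^dagger and its derivative is
   W (A S + S A^dagger) W^dagger, while differentiating V^dagger V = diag(p) gives
   A^dagger S + S A = diag(p').  In the frame W the SLD equation is solved entrywise,
   and H = C_Y - sum_jk c_jk |b_jk|^2 with weights c_jk > 0 and b = W^dagger W'.
   Hence H = C_Y exactly when W' = 0, i.e. when the eigenvectors w_k are constant. *)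

Section ComplexDerivative.
Variable R : realType.
Local Notation C := R[i].
Implicit Types (f g : R -> C) (t : R) (a b : C).

Definition is_cderive f t a :=
  is_derive t (1 : R) (fun s => complex.Re (f s)) (complex.Re a) /\
  is_derive t (1 : R) (fun s => complex.Im (f s)) (complex.Im a).

Lemma is_cderive_unique f t a b : is_cderive f t a -> is_cderive f t b -> a = b.
Proof.
case: a b => [a1 a2] [b1 b2] [/= fa1 fa2] [/= fb1 fb2].
by rewrite -(derive_val (is_derive := fa1)) -(derive_val (is_derive := fa2))
  -(derive_val (is_derive := fb1)) -(derive_val (is_derive := fb2)).
Qed.

Lemma is_cderive_cst (c : C) t : is_cderive (fun _ => c) t 0.
Proof. by split; exact: is_derive_cst. Qed.

Lemma is_cderiveD f g t a b : is_cderive f t a -> is_cderive g t b ->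
  is_cderive (fun s => f s + g s) t (a + b).
Proof.
case: a b => [a1 a2] [b1 b2] [fa1 fa2] [gb1 gb2]; split.
- have -> : (fun s => complex.Re (f s + g s)) =
            (fun s => complex.Re (f s)) + (fun s => complex.Re (g s)).
    by apply/funext => s; rewrite !fctE; case: (f s); case: (g s).
  exact: is_deriveD.
- have -> : (fun s => complex.Im (f s + g s)) =
            (fun s => complex.Im (f s)) + (fun s => complex.Im (g s)).
    by apply/funext => s; rewrite !fctE; case: (f s); case: (g s).
  exact: is_deriveD.
Qed.

Lemma is_cderiveM f g t a b : is_cderive f t a -> is_cderive g t b ->
  is_cderive (fun s => f s * g s) t (a * g t + f t * b).
Proof.
case: a b => [a1 a2] [b1 b2] [fa1 fa2] [gb1 gb2]; split.
- have -> : (fun s => complex.Re (f s * g s)) =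
      (fun s => complex.Re (f s)) * (fun s => complex.Re (g s)) -
      (fun s => complex.Im (f s)) * (fun s => complex.Im (g s)).
    by apply/funext => s; rewrite !fctE; case: (f s); case: (g s).
  apply: is_derive_eq; case: (f t) => ? ?; case: (g t) => ? ? /=.
  by rewrite /GRing.scale /=; ring.
- have -> : (fun s => complex.Im (f s * g s)) =
      (fun s => complex.Re (f s)) * (fun s => complex.Im (g s)) +
      (fun s => complex.Im (f s)) * (fun s => complex.Re (g s)).
    by apply/funext => s; rewrite !fctE; case: (f s); case: (g s).
  apply: is_derive_eq; case: (f t) => ? ?; case: (g t) => ? ? /=.
  by rewrite /GRing.scale /=; ring.
Qed.

Lemma is_cderive_RtoC (h : R -> R) t (dh : R) : is_derive t (1 : R) h dh ->
  is_cderive (fun s => RtoC (h s)) t (RtoC dh).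
Proof. by split => //=; exact: is_derive_cst. Qed.

Lemma is_cderive_conj f t a : is_cderive f t a ->
  is_cderive (fun s => Num.conj (f s)) t (Num.conj a).
Proof.
case: a => a1 a2 [fa1 fa2]; split => /=.
- by have -> : (fun s => complex.Re (Num.conj (f s))) = (fun s => complex.Re (f s))
    by apply/funext => s; case: (f s).
- have -> : (fun s => complex.Im (Num.conj (f s))) = - (fun s => complex.Im (f s)).
    by apply/funext => s; rewrite !fctE; case: (f s).
  exact: is_deriveN.
Qed.

Lemma is_cderive_sum n (f : 'I_n -> R -> C) (df : 'I_n -> C) t :
  (forall i, is_cderive (f i) t (df i)) ->
  is_cderive (fun s => \sum_(i < n) f i s) t (\sum_(i < n) df i).
Proof.
elim: n f df => [|n IH] f df fdf.
  have -> : (fun s => \sum_(i < 0) f i s) = (fun=> 0).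
    by apply/funext => s; rewrite big_ord0.
  by rewrite big_ord0; exact: is_cderive_cst.
have -> : (fun s => \sum_(i < n.+1) f i s) =
    (fun s => \sum_(i < n) f (widen_ord (leqnSn n) i) s + f ord_max s).
  by apply/funext => s; rewrite big_ord_recr.
by rewrite big_ord_recr; apply: is_cderiveD => //; apply: IH.
Qed.

Lemma is_cderive0_cst f t1 t2 : (forall t, is_cderive f t 0) -> f t1 = f t2.
Proof.
move=> f0; have eRe := is_derive_0_is_cst t1 t2 (fun t => (f0 t).1).
have eIm := is_derive_0_is_cst t1 t2 (fun t => (f0 t).2).
by move: eRe eIm; case: (f t1) => ? ?; case: (f t2) => ? ? /= -> ->.
Qed.

End ComplexDerivative.

Section MatrixDerivative.
Variable R : realType.
Local Notation C := R[i].

Definition is_mxderive m n (F : R -> 'M[C]_(m, n)) t (D : 'M[C]_(m, n)) :=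
  forall i j, is_cderive (fun s => F s i j) t (D i j).

Lemma is_mxderive_unique m n (F : R -> 'M[C]_(m, n)) t D E :
  is_mxderive F t D -> is_mxderive F t E -> D = E.
Proof. by move=> FD FE; apply/matrixP => i j; exact: is_cderive_unique (FD i j) (FE i j). Qed.

Lemma is_mxderive_cst m n (M : 'M[C]_(m, n)) t : is_mxderive (fun _ => M) t 0.
Proof. by move=> i j; rewrite mxE; exact: is_cderive_cst. Qed.

Lemma is_mxderiveM m n l (F : R -> 'M[C]_(m, n)) (G : R -> 'M[C]_(n, l)) t D E :
  is_mxderive F t D -> is_mxderive G t E ->
  is_mxderive (fun s => F s *m G s) t (D *m G t + F t *m E).
Proof.
move=> FD GE i j; rewrite !mxE -big_split /=.
have -> : (fun s => (F s *m G s) i j) = (fun s => \sum_k F s i k * G s k j).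
  by apply/funext => s; rewrite mxE.
by apply: is_cderive_sum => k; exact: is_cderiveM.
Qed.

Lemma is_mxderive_adj m n (F : R -> 'M[C]_(m, n)) t D :
  is_mxderive F t D -> is_mxderive (fun s => adj (F s)) t (adj D).
Proof.
move=> FD i j; rewrite !mxE.
have -> : (fun s => adj (F s) i j) = (fun s => Num.conj (F s j i)).
  by apply/funext => s; rewrite !mxE.
exact: is_cderive_conj.
Qed.

Lemma mx_derivableP m n (F : R -> 'M[C]_(m, n)) t :
  mx_derivable F -> is_mxderive F t (mx_deriv F t).
Proof.
move=> dF i j; have [dRe dIm] := dF t i j.
by rewrite mxE; split; rewrite /= derive1E; exact: derivableP.
Qed.

Lemma mx_deriv_val m n (F : R -> 'M[C]_(m, n)) t D : is_mxderive F t D -> mx_deriv F t = D.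
Proof.
move=> FD; apply/matrixP => i j; have [dRe dIm] := FD i j.
rewrite mxE !derive1E (derive_val (is_derive := dRe)) (derive_val (is_derive := dIm)).
by case: (D i j).
Qed.

End MatrixDerivative.

Section Adjoint.
Variable R : realType.
Local Notation C := R[i].

Lemma adjE m n (A : 'M[C]_(m, n)) i j : adj A i j = Num.conj (A j i).
Proof. by rewrite !mxE. Qed.

Lemma adjK m n (A : 'M[C]_(m, n)) : adj (adj A) = A.
Proof. by apply/matrixP => i j; rewrite !adjE conjCK. Qed.

Lemma adjM m n l (A : 'M[C]_(m, n)) (B : 'M[C]_(n, l)) : adj (A *m B) = adj B *m adj A.
Proof.
apply/matrixP => i j; rewrite adjE !mxE rmorph_sum; apply: eq_bigr => k _.
by rewrite rmorphM !adjE mulrC.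
Qed.

Lemma adjD m n (A B : 'M[C]_(m, n)) : adj (A + B) = adj A + adj B.
Proof. by apply/matrixP => i j; rewrite !mxE rmorphD. Qed.

Lemma mul_adj_col d (u v : 'cV[C]_d) i j : (u *m adj v) i j = u i 0 * Num.conj (v j 0).
Proof. by rewrite mxE big_ord1 adjE. Qed.

Lemma RtoCE (x : R) : RtoC x = real_complex R x.
Proof. by []. Qed.

Lemma conj_RtoC (x : R) : Num.conj (RtoC x) = RtoC x.
Proof. by change (conjc (RtoC x) = RtoC x); rewrite /= oppr0. Qed.

Definition diagR n (f : 'I_n -> R) : 'M[C]_n := diag_mx (\row_k RtoC (f k)).

Lemma diagRE n (f : 'I_n -> R) i j : diagR f i j = RtoC (f i) *+ (i == j).
Proof. by rewrite !mxE. Qed.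

Lemma adj_diagR n (f : 'I_n -> R) : adj (diagR f) = diagR f.
Proof.
apply/matrixP => i j; rewrite adjE !diagRE eq_sym.
by case: eqP => [->|_]; rewrite ?mulr1n ?mulr0n ?conj_RtoC ?rmorph0.
Qed.

Lemma mul_diagR n (f g : 'I_n -> R) : diagR f *m diagR g = diagR (fun k => f k * g k).
Proof.
by rewrite /diagR mulmx_diag; congr diag_mx; apply/rowP => k; rewrite !mxE !RtoCE rmorphM.
Qed.

Lemma diagR1 n : diagR (fun _ : 'I_n => 1) = 1%:M.
Proof. by apply/matrixP => i j; rewrite diagRE !mxE; case: (i == j). Qed.

Lemma mul_diagR_mxE m n (f : 'I_m -> R) (M : 'M[C]_(m, n)) i j :
  (diagR f *m M) i j = RtoC (f i) * M i j.
Proof. by rewrite mul_diag_mx !mxE. Qed.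

Lemma mul_mx_diagRE m n (f : 'I_n -> R) (M : 'M[C]_(m, n)) i j :
  (M *m diagR f) i j = M i j * RtoC (f j).
Proof. by rewrite mul_mx_diag !mxE. Qed.

End Adjoint.

Section SLDIdentities.
Variable F : numFieldType.

Lemma sld_offdiag_identity (sj sk a a' b b' m m' : F) :
  sk != 0 -> sj ^+ 2 + sk ^+ 2 != 0 ->
  b * sk + sj * a = 0 -> a' * sj + sk * b' = 0 ->
  a * sk + sj * b = 2^-1 * (sj ^+ 2 * m + m * sk ^+ 2) ->
  b' * sj + sk * a' = 2^-1 * (sk ^+ 2 * m' + m' * sj ^+ 2) ->
  sk ^+ 2 * m' * m =
    4 * (a' * a) - 16 * sk ^+ 4 * sj ^+ 2 / (sj ^+ 2 + sk ^+ 2) ^+ 2 * ((a / sk) * (a' / sk)).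
Proof.
move=> sk0 s0 eb eb' em em'.
have -> : m = 2 * (a * sk + sj * b) / (sj ^+ 2 + sk ^+ 2) by rewrite em; field; rewrite s0.
have -> : m' = 2 * (b' * sj + sk * a') / (sj ^+ 2 + sk ^+ 2) by rewrite em'; field; rewrite s0.
move/eqP: eb; rewrite addr_eq0 => /eqP eb.
move/eqP: eb'; rewrite addrC addr_eq0 => /eqP eb'.
have -> : b = - (sj * a) / sk by rewrite -eb mulfK.
have -> : b' = - (a' * sj) / sk by rewrite -eb' [sk * b']mulrC mulfK.
by field; rewrite sk0 s0.
Qed.

Lemma sld_diag_identity (s a a' q m : F) : s != 0 ->
  a' * s + s * a = q ->
  a * s + s * a' = 2^-1 * (s ^+ 2 * m + m * s ^+ 2) ->
  s ^+ 2 * m * m = 4 * (a' * a) -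
    16 * s ^+ 4 * s ^+ 2 / (s ^+ 2 + s ^+ 2) ^+ 2 *
    ((a / s - q / (2 * s * s)) * (a' / s - q / (2 * s * s))).
Proof.
move=> s0 eq_q em.
have -> : m = (a * s + s * a') / s ^+ 2 by rewrite em; field; rewrite s0.
have -> : a' = (q - s * a) / s by rewrite -eq_q; field; rewrite s0.
have s2 : s ^+ 2 + s ^+ 2 != 0 by rewrite -mulr2n -mulr_natr mulf_neq0 ?expf_neq0 ?pnatr_eq0.
by field; rewrite s0 s2.
Qed.

End SLDIdentities.

Section SLDInEigenframe.
Variable R : realType.
Local Notation C := R[i].
Variables (d : nat) (W A : 'M[C]_d) (s q : 'I_d -> R).
Hypotheses (s_gt0 : forall k, 0 < s k) (W_unitary : adj W *m W = 1%:M)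
  (dgram : adj A *m diagR s + diagR s *m A = diagR q).

Local Notation sC k := (RtoC (s k)).

Local Notation P := (diagR (fun k => s k ^+ 2)).
Local Notation D := (A *m diagR s + diagR s *m adj A).

Definition eig_rho := W *m P *m adj W.
Definition eig_drho := W *m D *m adj W.

(* The entries of W^dagger W' when V = W diag(s) and A = W^dagger V' (eigvec_velocityE). *)
Definition eig_velocity j k :=
  A j k / sC k - (j == k)%:R * (RtoC (q k) / (2 * sC k * sC k)).

Definition sld_weight j k : C :=
  16 * sC k ^+ 4 * sC j ^+ 2 / (sC j ^+ 2 + sC k ^+ 2) ^+ 2.

Lemma sC_neq0 k : sC k != 0.
Proof. by rewrite RtoCE fmorph_eq0 gt_eqF. Qed.

Lemma RtoC_sqr k : RtoC (s k ^+ 2) = sC k ^+ 2.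
Proof. by rewrite !RtoCE rmorphXn. Qed.

Lemma sqr_sum_neq0 j k : sC j ^+ 2 + sC k ^+ 2 != 0.
Proof. by rewrite -!RtoC_sqr RtoCE -rmorphD fmorph_eq0 gt_eqF // addr_gt0 ?exprn_gt0. Qed.

Lemma mulmx_adjWK m (X : 'M[C]_(m, d)) : X *m adj W *m W = X.
Proof. by rewrite -mulmxA W_unitary mulmx1. Qed.

Lemma mulmx_WadjK m (X : 'M[C]_(m, d)) : X *m W *m adj W = X.
Proof. by rewrite -mulmxA (mulmx1C W_unitary) mulmx1. Qed.

Lemma dgramE j k : Num.conj (A k j) * sC k + sC j * A j k = RtoC (q j) *+ (j == k).
Proof.
have := congr1 (fun M : 'M[C]_d => M j k) dgram.
by rewrite /= mxE mul_mx_diagRE mul_diagR_mxE diagRE adjE.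
Qed.

Lemma frame_drhoE j k : D j k = A j k * sC k + sC j * Num.conj (A k j).
Proof. by rewrite mxE mul_mx_diagRE mul_diagR_mxE adjE. Qed.

Lemma conj_eig_velocity j k : Num.conj (eig_velocity j k) =
  Num.conj (A j k) / sC k - (j == k)%:R * (RtoC (q k) / (2 * sC k * sC k)).
Proof. by rewrite rmorphB !rmorphM rmorph_nat !fmorphV !rmorphM /= !conj_RtoC rmorph_nat. Qed.

Lemma SLD_eig_frame lam : is_SLD eig_rho eig_drho lam ->
  let M := adj W *m lam *m W in D = 2^-1 *: (P *m M + M *m P).
Proof.
move=> [_ sld] M; have := congr1 (fun X => adj W *m X *m W) sld.
rewrite /eig_drho /eig_rho /M !mulmxA W_unitary mul1mx mulmx_adjWK => ->.
by rewrite -scalemxAr -scalemxAl mulmxDr mulmxDl !mulmxA W_unitary !mul1mx !mulmx_adjWK.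
Qed.

(* Each entry is one of the two identities sld_offdiag_identity / sld_diag_identity,
   after eliminating conj (A k j) with dgramE and M j k with SLD_eig_frame. *)
Lemma SLD_info_eig_frame lam : is_SLD eig_rho eig_drho lam ->
  SLD_info eig_rho lam = 4%:R * \tr (adj A *m A)
    - \sum_j \sum_k sld_weight j k * (eig_velocity j k * Num.conj (eig_velocity j k)).
Proof.
move=> sld; pose M := adj W *m lam *m W.
have DE j k : D j k = 2^-1 * (sC j ^+ 2 * M j k + M j k * sC k ^+ 2).
  by rewrite (SLD_eig_frame sld) 2!mxE mul_diagR_mxE mul_mx_diagRE !RtoC_sqr.
have -> : SLD_info eig_rho lam = \tr (P *m M *m M).
  by rewrite /SLD_info /eig_rho /M -!mulmxA mxtrace_mulC !mulmxA mulmx_WadjK.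
have -> : \tr (P *m M *m M) = \sum_k sC k ^+ 2 * \sum_j M k j * M j k.
  by apply: eq_bigr => k _; rewrite -mulmxA mul_diagR_mxE RtoC_sqr mxE.
rewrite /mxtrace [in RHS]exchange_big /= mulr_sumr -sumrB; apply: eq_bigr => k _.
rewrite !mxE mulr_sumr mulr_sumr -sumrB; apply: eq_bigr => j _.
rewrite adjE mulrA conj_eig_velocity /eig_velocity.
have [->|njk] := eqVneq j k.
  rewrite mul1r; apply: sld_diag_identity; first exact: sC_neq0.
    by rewrite dgramE eqxx mulr1n.
  by rewrite -frame_drhoE DE.
rewrite mul0r !subr0.
apply: (@sld_offdiag_identity _ (sC j) (sC k) (A j k) (Num.conj (A j k)) (Num.conj (A k j)) (A k j)).
- exact: sC_neq0.
- exact: sqr_sum_neq0.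
- by rewrite dgramE (negPf njk).
- by rewrite dgramE eq_sym (negPf njk).
- by rewrite -frame_drhoE DE.
- by rewrite -frame_drhoE DE.
Qed.

Lemma adj_frame_drho : adj D = D.
Proof. by rewrite adjD !adjM adjK adj_diagR addrC. Qed.

Lemma SLD_eig_exists : exists lam, is_SLD eig_rho eig_drho lam.
Proof.
pose M := \matrix_(j, k) (2 * D j k / (sC j ^+ 2 + sC k ^+ 2)).
have ME j k : M j k = 2 * D j k / (sC j ^+ 2 + sC k ^+ 2) by rewrite mxE.
exists (W *m M *m adj W); split.
  rewrite !adjM adjK mulmxA; congr (_ *m _ *m _); apply/matrixP => j k.
  rewrite adjE !ME !rmorphM rmorph_nat fmorphV rmorphD !rmorphXn /= !conj_RtoC.
  by rewrite -adjE adj_frame_drho [sC k ^+ 2 + _]addrC.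
have sld_M : 2^-1 *: (P *m M + M *m P) = D.
  apply/matrixP => j k; rewrite 2!mxE mul_diagR_mxE mul_mx_diagRE !RtoC_sqr !ME.
  by field; rewrite sqr_sum_neq0.
rewrite /eig_drho -sld_M -scalemxAr -scalemxAl /eig_rho mulmxDr mulmxDl !mulmxA.
by rewrite !mulmx_adjWK.
Qed.

Lemma sld_weight_gt0 j k : 0 < sld_weight j k.
Proof.
have sC_gt0 l : 0 < sC l by rewrite lt_def sC_neq0 RtoCE ler0c ltW.
have sC2_gt0 l : 0 < sC l ^+ 2 by apply: exprn_gt0.
apply: divr_gt0; last by apply/exprn_gt0/addr_gt0.
by rewrite mulr_gt0 ?sC2_gt0 // mulr_gt0 // exprn_gt0.
Qed.

End SLDInEigenframe.

Lemma sum2_weighted_normsq_eq0 (C : numClosedFieldType) n (c b : 'I_n -> 'I_n -> C) :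
  (forall j k, 0 < c j k) ->
  \sum_j \sum_k c j k * (b j k * Num.conj (b j k)) = 0 -> forall j k, b j k = 0.
Proof.
move=> c_gt0 sum0 j k.
have term_ge0 j' k' : 0 <= c j' k' * (b j' k' * Num.conj (b j' k')).
  by apply: mulr_ge0; [exact: ltW | exact: mul_conjC_ge0].
have /psumr_eq0P row0 := sum0.
have /psumr_eq0P term0 := row0 (fun j' _ => sumr_ge0 _ (fun k' _ => term_ge0 j' k')) j isT.
move: (term0 (fun k' _ => term_ge0 j k') k isT) => /eqP.
by rewrite mulf_eq0 gt_eqF //= mul_conjC_eq0 => /eqP.
Qed.

Section KrausFrame.
Variable R : realType.
Local Notation C := R[i].
Variables (d : nat) (psi0 : 'cV[C]_d) (Y : 'I_d -> R -> 'M[C]_d) (p : 'I_d -> R -> R).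
Hypotheses (Y_derivable : forall k, mx_derivable (Y k))
  (Y_orth : forall t (j k : 'I_d),
     \tr (Y k t *m pure_dm psi0 *m adj (Y j t)) = if j == k then RtoC (p k t) else 0)
  (p_gt0 : forall k t, 0 < p k t).

Definition kraus_mx t : 'M[C]_d := \matrix_(i, k) (Y k t *m psi0) i 0.
Definition dkraus_mx t : 'M[C]_d := \matrix_(i, k) (mx_deriv (Y k) t *m psi0) i 0.
Definition eigvec_mx t : 'M[C]_d := \matrix_(i, k) wvec psi0 Y p k t i 0.
Definition sqrtp t k := Num.sqrt (p k t).
Definition dp t k := derive1 (p k) t.
Definition frame_dkraus t := adj (eigvec_mx t) *m dkraus_mx t.

Lemma is_mxderive_kraus_mx t : is_mxderive kraus_mx t (dkraus_mx t).
Proof.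
move=> i k; rewrite mxE.
have -> : (fun s => kraus_mx s i k) = (fun s => (Y k s *m psi0) i 0).
  by apply/funext => s; rewrite mxE.
have := is_mxderiveM (mx_derivableP t (Y_derivable k)) (is_mxderive_cst psi0 t) i 0.
by rewrite mulmx0 addr0.
Qed.

Lemma gram_kraus_mx t : adj (kraus_mx t) *m kraus_mx t = diagR (p^~ t).
Proof.
apply/matrixP => j k; rewrite diagRE mxE.
have -> : RtoC (p j t) *+ (j == k) = if j == k then RtoC (p k t) else 0.
  by case: eqVneq => [->|]; rewrite ?mulr1n ?mulr0n.
have := Y_orth t j k.
rewrite /pure_dm !mulmxA -mulmxA -adjM mxtrace_mulC trace_mx11 mxE => <-.
by apply: eq_bigr => i _; rewrite !adjE !mxE.
Qed.

Lemma chan_out_kraus_mx t : chan_out psi0 Y t = kraus_mx t *m adj (kraus_mx t).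
Proof.
apply/matrixP => i l; rewrite /chan_out summxE mxE; apply: eq_bigr => k _.
by rewrite /pure_dm mulmxA -mulmxA -adjM mul_adj_col adjE !mxE.
Qed.

Lemma mx_deriv_chan_out t : mx_deriv (chan_out psi0 Y) t =
  dkraus_mx t *m adj (kraus_mx t) + kraus_mx t *m adj (dkraus_mx t).
Proof.
apply: mx_deriv_val.
have -> : chan_out psi0 Y = fun s => kraus_mx s *m adj (kraus_mx s).
  by apply/funext => s; rewrite chan_out_kraus_mx.
exact: is_mxderiveM (is_mxderive_kraus_mx t) (is_mxderive_adj (is_mxderive_kraus_mx t)).
Qed.

Lemma is_mxderive_gram t : is_mxderive (fun s => diagR (p^~ s)) t
  (adj (dkraus_mx t) *m kraus_mx t + adj (kraus_mx t) *m dkraus_mx t).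
Proof.
have -> : (fun s => diagR (p^~ s)) = fun s => adj (kraus_mx s) *m kraus_mx s.
  by apply/funext => s; rewrite gram_kraus_mx.
exact: is_mxderiveM (is_mxderive_adj (is_mxderive_kraus_mx t)) (is_mxderive_kraus_mx t).
Qed.

Lemma is_derive_p t k : is_derive t (1 : R) (p k) (dp t k).
Proof.
have [dRe _] := is_mxderive_gram t k k.
have pE : (fun s => complex.Re (diagR (p^~ s) k k)) = p k.
  by apply/funext => s; rewrite diagRE eqxx mulr1n.
rewrite pE in dRe; rewrite /dp derive1E.
by rewrite (derive_val (is_derive := dRe)).
Qed.

Lemma dgram_kraus_mx t :
  adj (dkraus_mx t) *m kraus_mx t + adj (kraus_mx t) *m dkraus_mx t = diagR (dp t).
Proof.
apply: (is_mxderive_unique (is_mxderive_gram t)) => j k; rewrite diagRE.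
have [<-|njk] := eqVneq j k.
  have -> : (fun s => diagR (p^~ s) j j) = fun s => RtoC (p j s).
    by apply/funext => s; rewrite diagRE eqxx mulr1n.
  by rewrite mulr1n; exact: is_cderive_RtoC (is_derive_p t j).
have -> : (fun s => diagR (p^~ s) j k) = fun=> 0.
  by apply/funext => s; rewrite diagRE (negPf njk).
exact: is_cderive_cst.
Qed.

Lemma C_Ups_kraus_mx t : C_Ups psi0 Y t = 4%:R * \tr (adj (dkraus_mx t) *m dkraus_mx t).
Proof.
rewrite /C_Ups; congr (_ * _); rewrite [RHS]/mxtrace; apply: eq_bigr => k _.
rewrite mxE /mxtrace; apply: eq_bigr => i _.
by rewrite /pure_dm mulmxA -mulmxA -adjM mul_adj_col adjE !mxE mulrC.
Qed.

Lemma sqrtp_gt0 t k : 0 < sqrtp t k.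
Proof. by rewrite sqrtr_gt0. Qed.

Lemma sqrtp_sqr t k : sqrtp t k ^+ 2 = p k t.
Proof. by rewrite sqr_sqrtr // ltW. Qed.

Lemma eigvec_mxE t : eigvec_mx t = kraus_mx t *m diagR (fun k => (sqrtp t k)^-1).
Proof. by apply/matrixP => i k; rewrite mul_mx_diagRE !mxE /wvec mulrC. Qed.

Lemma kraus_mx_eigvec t : kraus_mx t = eigvec_mx t *m diagR (sqrtp t).
Proof.
rewrite eigvec_mxE -mulmxA mul_diagR -[LHS]mulmx1 -diagR1.
by congr (_ *m diagR _); apply/funext => k; rewrite mulVf // gt_eqF ?sqrtp_gt0.
Qed.

Lemma eigvec_unitary t : adj (eigvec_mx t) *m eigvec_mx t = 1%:M.
Proof.
rewrite eigvec_mxE adjM adj_diagR !mulmxA -[_ *m adj _ *m _]mulmxA gram_kraus_mx.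
rewrite !mul_diagR -diagR1; congr diagR; apply/funext => k.
by rewrite -sqrtp_sqr; field; rewrite gt_eqF ?sqrtp_gt0.
Qed.

Lemma dkraus_frame t : dkraus_mx t = eigvec_mx t *m frame_dkraus t.
Proof. by rewrite /frame_dkraus mulmxA (mulmx1C (eigvec_unitary t)) mul1mx. Qed.

Lemma chan_out_eig t : chan_out psi0 Y t = eig_rho (eigvec_mx t) (sqrtp t).
Proof.
rewrite chan_out_kraus_mx kraus_mx_eigvec adjM adj_diagR !mulmxA.
rewrite -[_ *m diagR _ *m diagR _]mulmxA mul_diagR /eig_rho.
by congr (_ *m diagR _ *m _); apply/funext => k; rewrite expr2.
Qed.

Lemma mx_deriv_chan_out_eig t : mx_deriv (chan_out psi0 Y) t =
  eig_drho (eigvec_mx t) (frame_dkraus t) (sqrtp t).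
Proof.
rewrite mx_deriv_chan_out /eig_drho kraus_mx_eigvec dkraus_frame !adjM adj_diagR.
by rewrite mulmxDr mulmxDl !mulmxA.
Qed.

Lemma C_Ups_eig t : C_Ups psi0 Y t = 4%:R * \tr (adj (frame_dkraus t) *m frame_dkraus t).
Proof.
rewrite C_Ups_kraus_mx dkraus_frame adjM -!mulmxA.
by rewrite [adj (eigvec_mx t) *m (eigvec_mx t *m _)]mulmxA eigvec_unitary mul1mx.
Qed.

Lemma dgram_eig t : adj (frame_dkraus t) *m diagR (sqrtp t) + diagR (sqrtp t) *m frame_dkraus t
  = diagR (dp t).
Proof.
rewrite -dgram_kraus_mx kraus_mx_eigvec dkraus_frame !adjM adj_diagR.
by rewrite -!mulmxA ![adj (eigvec_mx t) *m (eigvec_mx t *m _)]mulmxA eigvec_unitary !mul1mx.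
Qed.

Definition dinv_sqrtp t k := - sqrtp t k ^- 2 * ((2 * sqrtp t k)^-1 * dp t k).

Lemma is_derive_inv_sqrtp t k : is_derive t (1 : R) (fun s => (sqrtp s k)^-1) (dinv_sqrtp t k).
Proof.
have dsqrt : is_derive t (1 : R) (Num.sqrt \o p k) ((2 * sqrtp t k)^-1 * dp t k).
  exact: is_derive1_comp (is_derive1_sqrt (p_gt0 k t)) (is_derive_p t k).
by apply: (is_deriveV _ dsqrt); rewrite gt_eqF ?sqrtp_gt0.
Qed.

Definition deigvec_mx t := dkraus_mx t *m diagR (fun k => (sqrtp t k)^-1)
  + kraus_mx t *m diagR (dinv_sqrtp t).

Lemma is_mxderive_eigvec t : is_mxderive eigvec_mx t (deigvec_mx t).
Proof.
have -> : eigvec_mx = fun s => kraus_mx s *m diagR (fun k => (sqrtp s k)^-1).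
  by apply/funext => s; rewrite eigvec_mxE.
apply: is_mxderiveM (is_mxderive_kraus_mx t) _ => i j; rewrite diagRE.
have [<-|nij] := eqVneq i j.
  have -> : (fun s => diagR (fun k => (sqrtp s k)^-1) i i) = fun s => RtoC (sqrtp s i)^-1.
    by apply/funext => s; rewrite diagRE eqxx mulr1n.
  by rewrite mulr1n; exact: is_cderive_RtoC (is_derive_inv_sqrtp t i).
have -> : (fun s => diagR (fun k => (sqrtp s k)^-1) i j) = fun=> 0.
  by apply/funext => s; rewrite diagRE (negPf nij).
exact: is_cderive_cst.
Qed.

Lemma eigvec_velocityE t j k : (adj (eigvec_mx t) *m deigvec_mx t) j k
  = eig_velocity (frame_dkraus t) (sqrtp t) (dp t) j k.
Proof.
rewrite mulmxDr !mulmxA -/(frame_dkraus t) kraus_mx_eigvec.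
rewrite [adj (eigvec_mx t) *m (eigvec_mx t *m _)]mulmxA eigvec_unitary mul1mx mul_diagR.
rewrite mxE mul_mx_diagRE diagRE /eig_velocity /dinv_sqrtp.
have sqrtp_neq0 : RtoC (sqrtp t k) != 0 by rewrite RtoCE fmorph_eq0 gt_eqF ?sqrtp_gt0.
have [->|njk] := eqVneq j k.
  rewrite mulr1n mul1r !RtoCE !(rmorphM, rmorphN, fmorphV, rmorphXn, rmorph_nat) /=.
  by field.
by rewrite mulr0n addr0 mul0r subr0 RtoCE fmorphV.
Qed.

Lemma quasi_classicalP : quasi_classical psi0 Y p <-> forall t, deigvec_mx t = 0.
Proof.
split => [qc t | dW0 k t1 t2].
  apply: (is_mxderive_unique (is_mxderive_eigvec t)).
  have -> : eigvec_mx = fun=> eigvec_mx t.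
    by apply/funext => s; apply/matrixP => i l; rewrite [LHS]mxE [RHS]mxE (qc l s t).
  exact: is_mxderive_cst.
apply/matrixP => i j; rewrite (ord1 j).
have W_cst s : is_cderive (fun s => eigvec_mx s i k) s 0.
  by have := is_mxderive_eigvec s i k; rewrite dW0 mxE.
have := is_cderive0_cst t1 t2 W_cst.
by rewrite !mxE.
Qed.

Lemma quasi_classical_velocity : quasi_classical psi0 Y p <->
  forall t j k, eig_velocity (frame_dkraus t) (sqrtp t) (dp t) j k = 0.
Proof.
rewrite quasi_classicalP; split => [dW0 t j k | v0 t].
  by rewrite -eigvec_velocityE dW0 mulmx0 mxE.
have W_dW0 : adj (eigvec_mx t) *m deigvec_mx t = 0.
  by apply/matrixP => j k; rewrite eigvec_velocityE v0 mxE.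
by rewrite -[deigvec_mx t]mul1mx -(mulmx1C (eigvec_unitary t)) -mulmxA W_dW0 mulmx0.
Qed.

Lemma SLD_kraus_exists t :
  exists lam, is_SLD (chan_out psi0 Y t) (mx_deriv (chan_out psi0 Y) t) lam.
Proof.
rewrite chan_out_eig mx_deriv_chan_out_eig.
exact: SLD_eig_exists (sqrtp_gt0 t) (eigvec_unitary t).
Qed.

Lemma SLD_info_kraus t lam :
  is_SLD (chan_out psi0 Y t) (mx_deriv (chan_out psi0 Y) t) lam ->
  SLD_info (chan_out psi0 Y t) lam = C_Ups psi0 Y t -
    \sum_j \sum_k sld_weight (sqrtp t) j k *
      (eig_velocity (frame_dkraus t) (sqrtp t) (dp t) j k *
       Num.conj (eig_velocity (frame_dkraus t) (sqrtp t) (dp t) j k)).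
Proof.
rewrite chan_out_eig mx_deriv_chan_out_eig C_Ups_eig => sld.
exact (SLD_info_eig_frame (sqrtp_gt0 t) (eigvec_unitary t) (dgram_eig t) sld).
Qed.

End KrausFrame.

Unset Implicit Arguments. Set Strict Implicit.

Theorem lemma3 (R : realType) (d : nat) (psi0 : 'cV[R[i]]_d)
  (Y : 'I_d -> R -> 'M[R[i]]_d) (p : 'I_d -> R -> R) :
  adj psi0 *m psi0 = 1%:M ->
  (forall k, mx_derivable (Y k)) ->
  (forall t, \sum_(k < d) (adj (Y k t) *m Y k t) = 1%:M) ->
  (forall t (j k : 'I_d),
     \tr (Y k t *m pure_dm psi0 *m adj (Y j t))
       = if j == k then RtoC (p k t) else 0) ->
  (forall j t, 0 < p j t) ->
  ((forall (t : R) (lam : 'M[R[i]]_d),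
      is_SLD (chan_out psi0 Y t) (mx_deriv (chan_out psi0 Y) t) lam ->
      SLD_info (chan_out psi0 Y t) lam = C_Ups psi0 Y t)
   <-> quasi_classical psi0 Y p).
Proof.
move=> _ Y_derivable _ Y_orth p_gt0.
rewrite (quasi_classical_velocity Y_derivable Y_orth p_gt0).
split => [H_eq_C t | vel0 t lam sld].
  have [lam sld] := SLD_kraus_exists Y_derivable Y_orth p_gt0 t.
  have := SLD_info_kraus Y_derivable Y_orth p_gt0 sld; rewrite (H_eq_C t lam sld).
  move/eqP; rewrite eq_sym subr_eq addrC -subr_eq subrr eq_sym => /eqP sum0.
  exact: sum2_weighted_normsq_eq0 (sld_weight_gt0 (sqrtp_gt0 p_gt0 t)) sum0.
rewrite (SLD_info_kraus Y_derivable Y_orth p_gt0 sld) big1 ?subr0 // => j _.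
by rewrite big1 // => k _; rewrite vel0 mul0r mulr0.
Qed.
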